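(* Let $\mathbf t_1,\mathbf t_2$ be hyper-terms that agree on $\mathrm{supp}(\mathbf t_1)\cap\mathrm{supp}(\mathbf t_2)$, and $Q_1,Q_2$ post hyper-assertions such that $\mathrm{idx}(Q_1)\cap\mathrm{supp}(\mathbf t_2)\subseteq\mathrm{supp}(\mathbf t_1)$ and $\mathrm{idx}(Q_2)\cap\mathrm{supp}(\mathbf t_1)\subseteq\mathrm{supp}(\mathbf t_2)$. Then $$\mathrm{wp}\,\mathbf t_1\,\{Q_1\}\wedge\mathrm{wp}\,\mathbf t_2\,\{Q_2\}\ \vdash\ \mathrm{wp}\,(\mathbf t_1+\mathbf t_2)\,\{\lambda\mathbf r.\ Q_1(\mathbf r)\wedge Q_2(\mathbf r)\}.$$
   Context: Setting. $\mathrm{Val}=\mathbb{Z}$; $\mathrm{PVar}$ is a countably infinite set of program variables; a store is a function $s:\mathrm{PVar}\to\mathrm{Val}$; indices are $\mathrm{Idx}=\mathbb{N}$. Terms of a first-order imperative language are generated by $t ::= v \mid x \mid * \mid t\oplus t \mid \mathtt{skip}\mid x:=t \mid t;t \mid \mathtt{if}\ t\ \mathtt{then}\ t\ \mathtt{else}\ t \mid \mathtt{while}\ t\ \mathtt{do}\ t$, with a nondeterministic big-step semantics $t,s\Downarrow v,s'$. A hyper-term $\mathbf t$ is a finitely supported partial function from $\mathrm{Idx}$ to terms; a hyper-store is a total function $\mathbf s:\mathrm{Idx}\to\mathrm{Store}$; a hyper-return-value is a finitely supported partial function $\mathbf v:\mathrm{Idx}\rightharpoonup\mathrm{Val}$.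 For partial maps $\mathbf f,\mathbf g$ agreeing on the intersection of their supports, $\mathbf f+\mathbf g$ is their union. $\mathbf t,\mathbf s\Downarrow\mathbf v,\mathbf s'$ holds iff for every $i\in\mathrm{supp}(\mathbf t)$, $\mathbf t(i),\mathbf s(i)\Downarrow\mathbf v(i),\mathbf s'(i)$, and for every $i\notin\mathrm{supp}(\mathbf t)$, $\mathbf s'(i)=\mathbf s(i)$ and $\mathbf v(i)$ is undefined. A hyper-assertion is a predicate on hyper-stores; a post hyper-assertion is an upward-closed map $Q$ from hyper-return-values to hyper-assertions (if $Q(\mathbf v)(\mathbf s)$ and $\mathbf v'$ agrees with $\mathbf v$ on $\mathrm{supp}(\mathbf v)$ then $Q(\mathbf v')(\mathbf s)$). Entailment $P\vdash R$ means $\forall\mathbf s.\ P(\mathbf s)\Rightarrow R(\mathbf s)$. $\mathrm{wp}\,\mathbf t\,\{Q\}(\mathbf s):\iff\forall\mathbf v,\mathbf s'.\ (\mathbf t,\mathbf s\Downarrow\mathbf v,\mathbf s')\Rightarrow Q(\mathbf v)(\mathbf s')$. Indices of a post hyper-assertion: $\mathrm{idx}(Q)=\mathrm{Idx}\setminus\{i\mid\forall\mathbf v,\mathbf s,s'.\ Q(\mathbf v)(\mathbf s)\Leftrightarrow Q(\mathbf v[i:\bot])(\mathbf s[i:s'])\}$, where $\mathbf v[i:\bot]$ makes $\mathbf v$ undefined at $i$ and $\mathbf s[i:s']$ is function update. *)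

From Stdlib Require Import ZArith.
Open Scope Z_scope.

Definition Val := Z.
Definition PVar := nat.
Definition Store := PVar -> Val.
Definition Idx := nat.

Inductive term : Type :=
| TVal : Val -> term
| TVar : PVar -> term
| TStar : term
| TOp : (Val -> Val -> Val) -> term -> term -> term
| TSkip : term
| TAssign : PVar -> term -> term
| TSeq : term -> term -> term
| TIf : term -> term -> term -> term
| TWhile : term -> term -> term.

Definition supd (s : Store) (x : PVar) (v : Val) : Store :=
  fun y => if Nat.eqb y x then v else s y.

(** Nondeterministic big-step semantics  t, s ⇓ v, s'.
    Conventions: skip and assignment return 0; a guard value v is "true"
    iff v <> 0; a terminated loop returns 0. *)
Inductive eval : term -> Store -> Val -> Store -> Prop :=
| EVal : forall v s, eval (TVal v) s v s
| EVar : forall x s, eval (TVar x) s (s x) s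
| EStar : forall v s, eval TStar s v s
| EOp : forall f t1 t2 s s1 s2 v1 v2,
    eval t1 s v1 s1 -> eval t2 s1 v2 s2 -> eval (TOp f t1 t2) s (f v1 v2) s2
| ESkip : forall s, eval TSkip s 0 s
| EAssign : forall x t s s1 v,
    eval t s v s1 -> eval (TAssign x t) s 0 (supd s1 x v)
| ESeq : forall t1 t2 s s1 s2 v1 v2,
    eval t1 s v1 s1 -> eval t2 s1 v2 s2 -> eval (TSeq t1 t2) s v2 s2
| EIfT : forall b t1 t2 s s1 s2 vb v,
    eval b s vb s1 -> vb <> 0 -> eval t1 s1 v s2 -> eval (TIf b t1 t2) s v s2
| EIfF : forall b t1 t2 s s1 s2 v,
    eval b s 0 s1 -> eval t2 s1 v s2 -> eval (TIf b t1 t2) s v s2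
| EWhileF : forall b t s s1,
    eval b s 0 s1 -> eval (TWhile b t) s 0 s1
| EWhileT : forall b t s s1 s2 s3 vb v1 v,
    eval b s vb s1 -> vb <> 0 -> eval t s1 v1 s2 ->
    eval (TWhile b t) s2 v s3 -> eval (TWhile b t) s v s3.

(** Hyper-objects. Partial maps are [Idx -> option _]; finiteness of the
    support is a separate predicate. *)
Definition hterm := Idx -> option term.
Definition hstore := Idx -> Store.
Definition hval := Idx -> option Val.

Definition finsupp {A : Type} (f : Idx -> option A) : Prop :=
  exists N : nat, forall i, (N <= i)%nat -> f i = None.

(** Union of partial maps (left-biased; meaningful when they agree). *)
Definition hplus {A : Type} (f g : Idx -> option A) : Idx -> option A :=
  fun i => match f i with Some a => Some a | None => g i end.

Definition agree_on_inter {A : Type} (f g : Idx -> option A) : Prop :=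
  forall i a b, f i = Some a -> g i = Some b -> a = b.

Definition hsem (t : hterm) (s : hstore) (v : hval) (s' : hstore) : Prop :=
  forall i, match t i with
            | Some ti => exists vi, v i = Some vi /\ eval ti (s i) vi (s' i)
            | None => s' i = s i /\ v i = None
            end.

Definition hassertion := hstore -> Prop.
(** Post hyper-assertions: only their values on finitely supported
    hyper-return-values matter; all quantifications over hyper-return-values
    below are restricted to finitely supported ones. *)
Definition postassertion := hval -> hassertion.

Definition upward_closed (Q : postassertion) : Prop :=
  forall (v v' : hval) (s : hstore), finsupp v -> finsupp v' ->
    Q v s -> (forall i x, v i = Some x -> v' i = Some x) -> Q v' s.

Definition entails (P R : hassertion) : Prop := forall s, P s -> R s.

Definition wp (t : hterm) (Q : postassertion) : hassertion :=
  fun s => forall v s', hsem t s v s' -> Q v s'.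

Definition vundef (v : hval) (i : Idx) : hval :=
  fun j => if Nat.eqb j i then None else v j.

Definition hsupd (s : hstore) (i : Idx) (st : Store) : hstore :=
  fun j => if Nat.eqb j i then st else s j.

Definition in_idx (Q : postassertion) (i : Idx) : Prop :=
  ~ (forall (v : hval) (s : hstore) (st : Store), finsupp v ->
       (Q v s <-> Q (vundef v i) (hsupd s i st))).

From Stdlib Require Import Classical FunctionalExtensionality Arith Lia.

(* Each half of the conjunction is a frame property: a run of [t1 + t2] restricts
   to a run of [t1] whose final hyper-store differs from the real one only at the
   finitely many indices in [supp t2 \ supp t1].  These lie outside [idx Q1], so
   [Q1] is insensitive to updating them one at a time; upward closure then passes
   from the restricted return values to the full ones. *)

Definition hrestrict {A B : Type} (t : Idx -> option A) (v : Idx -> option B) :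
  Idx -> option B :=
  fun j => match t j with Some _ => v j | None => None end.

Definition hextends {A : Type} (f g : Idx -> option A) : Prop :=
  forall i a, f i = Some a -> g i = Some a.

Lemma hrestrict_finsupp {A B : Type} (t : Idx -> option A) (v : Idx -> option B) :
  finsupp v -> finsupp (hrestrict t v).
Proof.
  intros [N HN]. exists N. intros i Hi. unfold hrestrict.
  destruct (t i); auto.
Qed.

Lemma hrestrict_extends {A B : Type} (t : Idx -> option A) (v : Idx -> option B) :
  hextends (hrestrict t v) v.
Proof.
  intros i b. unfold hrestrict. destruct (t i); [auto | discriminate].
Qed.

Lemma hplus_finsupp {A : Type} (f g : Idx -> option A) :
  finsupp f -> finsupp g -> finsupp (hplus f g).
Proof.
  intros [N1 H1] [N2 H2]. exists (N1 + N2)%nat. intros i Hi.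
  unfold hplus. rewrite H1, H2; auto; lia.
Qed.

Lemma hplus_extends_l {A : Type} (f g : Idx -> option A) : hextends f (hplus f g).
Proof. intros i a E. unfold hplus. now rewrite E. Qed.

Lemma hplus_extends_r {A : Type} (f g : Idx -> option A) :
  agree_on_inter f g -> hextends g (hplus f g).
Proof.
  intros Ag i a E. unfold hplus.
  destruct (f i) eqn:Ef; auto.
  f_equal. exact (Ag _ _ _ Ef E).
Qed.

Lemma hsem_val_finsupp (T : hterm) s v s' :
  finsupp T -> hsem T s v s' -> finsupp v.
Proof.
  intros [N HN] Hs. exists N. intros i Hi.
  specialize (Hs i). rewrite (HN i Hi) in Hs. tauto.
Qed.

Lemma hsem_restrict (t T : hterm) s v s' :
  hextends t T -> hsem T s v s' ->
  hsem t s (hrestrict t v) (fun j => match t j with Some _ => s' j | None => s j end).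
Proof.
  intros Hext Hs i. unfold hrestrict.
  destruct (t i) eqn:E; auto.
  specialize (Hs i). now rewrite (Hext _ _ E) in Hs.
Qed.

Lemma hstore_update_invariant (P : hstore -> Prop) (D : Idx -> Prop) (s s' : hstore) :
  (exists N, forall i, (N <= i)%nat -> s i = s' i) ->
  (forall i, ~ D i -> s i = s' i) ->
  (forall i s0, D i -> P s0 -> P (hsupd s0 i (s' i))) ->
  P s -> P s'.
Proof.
  intros [N HN] Hout Hstep Hs.
  assert (Hpatch : forall n, P (fun j : Idx => if j <? n then s' j else s j)).
  { induction n as [|n IH]; [exact Hs|].
    assert (Hsucc : (fun j : Idx => if j <? S n then s' j else s j)
                    = hsupd (fun j : Idx => if j <? n then s' j else s j) n (s' n)).
    { extensionality j. unfold hsupd.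
      destruct (Nat.eqb_spec j n), (Nat.ltb_spec j n), (Nat.ltb_spec j (S n));
        subst; auto; lia. }
    rewrite Hsucc.
    destruct (classic (D n)) as [Dn | nDn]; [now apply Hstep|].
    replace (hsupd _ n (s' n)) with (fun j => if j <? n then s' j else s j);
      [exact IH|].
    extensionality j. unfold hsupd.
    destruct (Nat.eqb_spec j n); auto. subst.
    rewrite Nat.ltb_irrefl. now apply Hout. }
  replace s' with (fun j => if j <? N then s' j else s j); [apply Hpatch|].
  extensionality j. destruct (Nat.ltb_spec j N); auto.
Qed.

Lemma hsupd_outside_idx (Q : postassertion) (i : Idx) (v : hval) (s : hstore) st :
  ~ in_idx Q i -> finsupp v -> v i = None -> Q v s -> Q v (hsupd s i st).
Proof.
  intros Hi Hv Hvi HQ. apply NNPP in Hi.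
  apply (proj1 (Hi v s st Hv)) in HQ.
  replace (vundef v i) with v in HQ; auto.
  extensionality j. unfold vundef.
  destruct (Nat.eqb_spec j i); subst; auto.
Qed.

Lemma wp_extend (t T : hterm) (Q : postassertion) :
  finsupp T -> upward_closed Q -> hextends t T ->
  (forall i, in_idx Q i -> T i <> None -> t i <> None) ->
  entails (wp t Q) (wp T Q).
Proof.
  intros [N HN] Hup Hext Hidx s Hwp v s' Hs.
  assert (Hv : finsupp v) by (apply (hsem_val_finsupp T s v s'); [exists N|]; auto).
  assert (Hv1 : finsupp (hrestrict t v)) by now apply hrestrict_finsupp.
  apply (Hup (hrestrict t v) v s' Hv1 Hv); [|apply hrestrict_extends].
  apply (hstore_update_invariant (Q (hrestrict t v))
           (fun i => t i = None /\ T i <> None)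
           (fun j => match t j with Some _ => s' j | None => s j end) s').
  - exists N. intros i Hi. destruct (t i); auto.
    specialize (Hs i). rewrite (HN i Hi) in Hs. symmetry; tauto.
  - intros i Hi. destruct (t i) eqn:E; auto.
    specialize (Hs i). destruct (T i); [exfalso; apply Hi; split; auto; discriminate|].
    symmetry; tauto.
  - intros i s0 [Et ET]. apply hsupd_outside_idx; auto.
    + intro Hi. exact (Hidx i Hi ET Et).
    + unfold hrestrict. now rewrite Et.
  - exact (Hwp _ _ (hsem_restrict t T s v s' Hext Hs)).
Qed.

Theorem mainTheorem9 (t1 t2 : hterm) (Q1 Q2 : postassertion) :
  finsupp t1 -> finsupp t2 ->
  upward_closed Q1 -> upward_closed Q2 ->
  agree_on_inter t1 t2 ->
  (forall i, in_idx Q1 i -> t2 i <> None -> t1 i <> None) ->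
  (forall i, in_idx Q2 i -> t1 i <> None -> t2 i <> None) ->
  entails (fun s => wp t1 Q1 s /\ wp t2 Q2 s)
          (wp (hplus t1 t2) (fun r s => Q1 r s /\ Q2 r s)).
Proof.
  intros F1 F2 U1 U2 Ag I1 I2 s [W1 W2] v s' Hs.
  pose proof (hplus_finsupp t1 t2 F1 F2) as F.
  split.
  - apply (wp_extend t1 (hplus t1 t2) Q1 F U1 (hplus_extends_l t1 t2)) with s; auto.
    intros i Hi HT E. unfold hplus in HT. rewrite E in HT. exact (I1 i Hi HT E).
  - apply (wp_extend t2 (hplus t1 t2) Q2 F U2 (hplus_extends_r t1 t2 Ag)) with s; auto.
    intros i Hi HT E. unfold hplus in HT. rewrite E in HT.
    destruct (t1 i) eqn:E1; [|exact (HT eq_refl)].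
    apply (I2 i Hi); [rewrite E1; discriminate | exact E].
Qed.
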